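(* Let $(X,d)$ and $(Y,\rho)$ be compact metric spaces, let $F=\{f_1,\dots,f_k\}$ be a multiple mapping on $X$ and $G=\{g_1,\dots,g_m\}$ a multiple mapping on $Y$, and let $T:X\to Y$ be a topological conjugacy from $(X,F)$ to $(Y,G)$. Then $F$ is Hausdorff metric sensitive (with respect to $d_H$) if and only if $G$ is Hausdorff metric sensitive (with respect to $\rho_H$).
   Context: A multiple mapping $F=\{f_1,\dots,f_k\}$ on $X$ is a finite tuple of continuous self-maps of $X$; for $x\in X$ and $n\ge1$, $F(x)=\{f_1(x),\dots,f_k(x)\}$ and $F^n(x)=\{f_{i_1}f_{i_2}\cdots f_{i_n}(x)\mid i_1,\dots,i_n\in\{1,\dots,k\}\}$; for $A\subset X$, $F(A)=\bigcup_{a\in A}F(a)$. $d_H$ (resp. $\rho_H$) denotes the Hausdorff metric $d_H(A,B)=\max\{\sup_{a\in A}\inf_{b\in B}d(a,b),\sup_{b\in B}\inf_{a\in A}d(a,b)\}$ on nonempty compact subsets. $F$ is Hausdorff metric sensitive if there is $\delta>0$ such that for every nonempty open $U\subset X$ there exist $x,y\in U$ and $n\in\mathbb{Z}^+=\{1,2,\dots\}$ with $d_H(F^n(x),F^n(y))>\delta$. A topological conjugacy from $(X,F)$ to $(Y,G)$ is a homeomorphism $T:X\to Y$ such that $T(F(x))=G(T(x))$ for all $x\in X$. *)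

From HB Require Import structures.
From mathcomp Require Import all_boot all_order all_algebra.
From mathcomp Require Import all_classical all_reals all_analysis.
Set Implicit Arguments. Unset Strict Implicit. Unset Printing Implicit Defensive.
Import Order.TTheory GRing.Theory Num.Theory.
Local Open Scope classical_set_scope.
Local Open Scope ring_scope.

(* A multiple mapping F = {f_1,...,f_k} is represented by f : 'I_k -> X -> X. *)

Definition mm_img {X : Type} {k : nat} (f : 'I_k -> X -> X) (x : X) : set X :=
  [set f i x | i in [set: 'I_k]].

Definition mm_iter {X : Type} {k : nat} (f : 'I_k -> X -> X) (n : nat) (x : X)
  : set X :=
  [set y | exists w : seq 'I_k, size w = n /\ y = foldr (fun i z => f i z) x w].

Definition hausdorff_dist {R : realType} {X : metricType R} (A B : set X) : R :=
  Num.max (sup [set inf [set mdist a b | b in B] | a in A])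
          (sup [set inf [set mdist a b | a in A] | b in B]).

Definition hm_sensitive {R : realType} {X : metricType R} {k : nat}
  (f : 'I_k -> X -> X) : Prop :=
  exists2 delta : R, 0 < delta &
    forall U : set X, open U -> U !=set0 ->
      exists x y (n : nat), [/\ U x, U y, (0 < n)%N &
        delta < hausdorff_dist (mm_iter f n x) (mm_iter f n y)].

Definition homeomorphism {X Y : topologicalType} (T : X -> Y) : Prop :=
  continuous T /\ exists S : Y -> X, [/\ continuous S, cancel T S & cancel S T].

Definition top_conjugacy {X Y : topologicalType} {k m : nat}
  (f : 'I_k -> X -> X) (g : 'I_m -> Y -> Y) (T : X -> Y) : Prop :=
  homeomorphism T /\ forall x : X, T @` (mm_img f x) = mm_img g (T x).

From HB Require Import structures.
From mathcomp Require Import all_boot all_order all_algebra.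
From mathcomp Require Import all_classical all_reals all_analysis.
Import Order.TTheory GRing.Theory Num.Theory.
Local Open Scope classical_set_scope.
Local Open Scope ring_scope.

(* By compactness of [Y], the inverse [S] of the conjugacy [T] is uniformly
   continuous: points whose [T]-images are [eta]-close are [delta]-close.  Since
   [T (F^n x) = G^n (T x)], a point of [F^n x] that is [delta]-far from all of
   [F^n y] has an image [eta]-far from all of [G^n (T y)].  So the [delta]
   witnessing sensitivity of [F] in the open set [T^-1 U] gives [eta / 2] for
   [G] in [U], and the converse is the same argument applied to [S]. *)

Lemma compact_unif_continuous {R : realType} {X Y : pseudoMetricType R}
    (f : X -> Y) :
  compact [set: X] -> continuous f -> unif_continuous f.
Proof.
move=> cptX cf; apply/unif_continuousP => e e0.
have e20 : 0 < e / 2 by rewrite divr_gt0.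
suff : \forall d \near 0^'+, [set: X] `<=`
    (fun x => forall y, ball x d y -> ball (f x) e (f y)).
  move=> /(filterI (nbhs_right_gt 0)) /filter_ex [d [d0 fd]].
  by exists d => // -[x y] /=; exact: fd.
apply: (proj1 (compact_near_coveringP _) cptX) => x _.
have [r /= r0 fr] := (nbhs_ballP _ _).1 (cf x _ (nbhsx_ballx (f x) _ e20)).
have r20 : 0 < r / 2 by rewrite divr_gt0.
exists (ball x (r / 2), [set d | d < r / 2]).
  by split => //=; [exact: nbhsx_ballx | exact: nbhs_right_lt].
move=> [x' d] [/= xx' dr] y x'y.
have r2r : r / 2 <= r by rewrite ltW // ltr_pdivrMr // ltr_pMr // ltr1n.
have xy : ball x r y := ball_split xx' (le_ball (ltW dr) x'y).
exact: ball_splitr (fr _ (le_ball r2r xx')) (fr _ xy).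
Qed.

Lemma compact_mdist_bounded {R : realType} {X : metricType R} :
  compact [set: X] -> exists M, forall x y : X, mdist x y <= M.
Proof.
move=> cptX; have [[x0 _]|noX] := pselect (exists x0 : X, True); last first.
  by exists 0 => x; exfalso; apply: noX; exists x.
suff : \forall M \near +oo, [set: X] `<=` (fun x => mdist x x0 < M).
  move=> /filter_ex [M xM]; exists (M + M) => x y.
  apply: (le_trans (metric_triangle x x0 y)).
  by rewrite lerD // ?(metric_sym x0) ltW //; exact: xM.
apply: (proj1 (compact_near_coveringP _) cptX) => x _.
exists (ball x 1, [set M | mdist x x0 + 1 < M]).
  by split => /=; [exact: nbhsx_ballx | apply: nbhs_pinfty_gt; rewrite num_real].
move=> [x' M] [/= xx' xM]; move: xx'; rewrite ballEmdist /= => xx'.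
apply: (le_lt_trans (metric_triangle x' x x0)); apply: le_lt_trans xM.
by rewrite addrC lerD // metric_sym ltW.
Qed.

Definition hausdorff_excess {R : realType} {X : metricType R} (A B : set X) : R :=
  sup [set inf [set mdist a b | b in B] | a in A].

Lemma hausdorff_distE {R : realType} {X : metricType R} (A B : set X) :
  hausdorff_dist A B = Num.max (hausdorff_excess A B) (hausdorff_excess B A).
Proof.
rewrite /hausdorff_dist /hausdorff_excess; congr (Num.max _ (sup _)).
by apply: eq_imagel => b _; congr inf; apply: eq_imagel => a _; exact: metric_sym.
Qed.

(* [sup] of a set that is not bounded above is [0], hence the bound [M]. *)
Lemma hausdorff_excess_image {R : realType} {X Y : metricType R} {T : X -> Y}
    {A B : set X} {M eta delta : R} :
  (forall y y' : Y, mdist y y' <= M) -> A !=set0 -> B !=set0 ->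
  (forall a b, mdist (T a) (T b) < eta -> mdist a b < delta) ->
  delta < hausdorff_excess A B -> eta <= hausdorff_excess (T @` A) (T @` B).
Proof.
move=> bM [a0 Aa0] [b0 Bb0] Teta sep.
have inf_lb (Z : metricType R) (z : Z) (C : set Z) :
    has_lbound [set mdist z c | c in C].
  by exists 0 => _ [c _ <-]; exact: mdist_ge0.
have [_ [a Aa <-] delta_a] : exists2 r, [set inf [set mdist a b | b in B] | a in A] r
    & delta < r.
  by apply: sup_gt sep; exists (inf [set mdist a0 b | b in B]), a0.
have eta_Ta : eta <= inf [set mdist (T a) y | y in T @` B].
  apply: lb_le_inf; first by exists (mdist (T a) (T b0)), (T b0) => //; exists b0.
  move=> _ [_ [b Bb <-] <-]; rewrite leNgt; apply/negP => /Teta.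
  apply/negP; rewrite -leNgt; apply: (le_trans (ltW delta_a)).
  by apply: ge_inf => //; exists b.
apply: (le_trans eta_Ta); apply: ub_le_sup; last by exists (T a) => //; exists a.
exists M => _ [_ [c Ac <-] <-]; apply: le_trans (bM (T c) (T b0)).
by apply: ge_inf => //; exists (T b0) => //; exists b0.
Qed.

Section MultipleMapping.
Variables (X : Type) (k : nat) (f : 'I_k -> X -> X).

Lemma mm_iter0 x : mm_iter f 0 x = [set x].
Proof.
apply/seteqP; split => [_ [w [/size0nil -> ->]] //|_ ->].
by exists [::].
Qed.

Lemma mm_iterS n x : mm_iter f n.+1 x = \bigcup_(y in mm_iter f n x) mm_img f y.
Proof.
apply/seteqP; split => [_ [[|i w] [//= [sw] ->]]|_ [_ [w [sw ->]] [i _ <-]]].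
  by exists (foldr (fun i z => f i z) x w); [exists w | exists i].
by exists (i :: w); rewrite /= sw.
Qed.

Lemma mm_iter_neq0 n x : (0 < k)%N -> mm_iter f n x !=set0.
Proof.
move=> k_gt0; exists (foldr (fun i z => f i z) x (nseq n (Ordinal k_gt0))).
by exists (nseq n (Ordinal k_gt0)); rewrite size_nseq.
Qed.

End MultipleMapping.

Lemma image_mm_iter {X Y : Type} {k m : nat} {f : 'I_k -> X -> X}
    {g : 'I_m -> Y -> Y} {T : X -> Y} :
  (forall x, T @` mm_img f x = mm_img g (T x)) ->
  forall n x, T @` mm_iter f n x = mm_iter g n (T x).
Proof.
move=> fgT; elim=> [|n IH] x; first by rewrite !mm_iter0 image_set1.
by rewrite !mm_iterS image_bigcup -IH bigcup_image; under eq_bigcupr do rewrite fgT.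
Qed.

Lemma top_conjugacy_sym {X Y : topologicalType} {k m : nat}
    {f : 'I_k -> X -> X} {g : 'I_m -> Y -> Y} {T : X -> Y} :
  top_conjugacy f g T -> exists S, top_conjugacy g f S.
Proof.
move=> [[cT [S [cS TK SK]]] fgT]; exists S; split; first by split=> //; exists T.
move=> y; rewrite -{1}[y]SK -fgT image_comp.
by under eq_imagel do rewrite /= TK; rewrite image_id.
Qed.

Lemma hm_sensitive_top_conjugacy {R : realType} {X Y : metricType R}
    {k m : nat} {f : 'I_k -> X -> X} {g : 'I_m -> Y -> Y} {T : X -> Y} :
  compact [set: Y] -> (0 < k)%N -> top_conjugacy f g T ->
  hm_sensitive f -> hm_sensitive g.
Proof.
move=> cptY k_gt0 [[cT [S [cS TK SK]]] fgT] [delta delta_gt0 sensf].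
have [eta eta_gt0 Seta] :=
  (unif_continuousP S).1 (compact_unif_continuous S cptY cS) _ delta_gt0.
have Teta a b : mdist (T a) (T b) < eta -> mdist a b < delta.
  by have := Seta (T a, T b); rewrite !ballEmdist /= !TK.
have [M bM] := compact_mdist_bounded cptY.
have eta2_lt : eta / 2 < eta by rewrite ltr_pdivrMr // ltr_pMr // ltr1n.
exists (eta / 2) => [|U oU [y Uy]]; first by rewrite divr_gt0.
have oTU : open (T @^-1` U) by apply: open_comp => // x _; exact: cT.
have neTU : T @^-1` U !=set0 by exists (S y); rewrite /= SK.
have [x1 [x2 [n [Ux1 Ux2 n_gt0 sep]]]] := sensf _ oTU neTU.
exists (T x1), (T x2), n; split => //.
rewrite -!(image_mm_iter fgT) !hausdorff_distE lt_max.
move: sep; rewrite hausdorff_distE lt_max => /orP[] sep; apply/orP; [left|right];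
  apply: lt_le_trans eta2_lt (hausdorff_excess_image bM _ _ Teta sep);
  exact: mm_iter_neq0.
Qed.

Theorem theorem4p2 (R : realType) (X Y : metricType R)
  (hX : compact [set: X]) (hY : compact [set: Y])
  (k m : nat) (hk : (0 < k)%N) (hm : (0 < m)%N)
  (f : 'I_k -> X -> X) (g : 'I_m -> Y -> Y)
  (hf : forall i, continuous (f i)) (hg : forall j, continuous (g j))
  (T : X -> Y) (hT : top_conjugacy f g T) :
  hm_sensitive f <-> hm_sensitive g.
Proof.
have [S hS] := top_conjugacy_sym hT.
split; first exact: hm_sensitive_top_conjugacy hY hk hT.
exact: hm_sensitive_top_conjugacy hX hm hS.
Qed.
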